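(* Let $M\in\mathbb R^{\mathbb N\times\mathbb N}$ be bounded on $\ell_2$ and elliptic (there is $C_{\rm ell}>0$ with $Mx\cdot x\ge C_{\rm ell}\|x\|_{\ell_2}^2$), let $n_1=1<n_2<\cdots$ be a block structure, let $M(i,j)=0$ for $|i-j|>b_0$, and $M\in\mathcal B(d,b_0)$ for a metric $d$ on $\mathbb N$. Let $M=LU$ be the block-$LU$-factorization with $L$ block-lower triangular, $U$ block-upper triangular, $L(i,i)=I$. Then for every $\varepsilon>0$ there exist $b\in\mathbb N$ and a block-lower triangular $L_\varepsilon^{-1}\in\mathcal B(d,b)$ with $L_\varepsilon^{-1}(i,i)=I$ and $L_\varepsilon^{-1}(i,j)=0$ for $|i-j|>b$, such that $\|L^{-1}-L_\varepsilon^{-1}\|_2\le\varepsilon$; $L_\varepsilon^{-1}$ is invertible and $\sup_{\varepsilon>0}(\|L_\varepsilon\|_2+\|L_\varepsilon^{-1}\|_2)<\infty$.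
   Context: $\|\cdot\|_2$ is the operator norm on $\ell_2$. $M\in\mathcal B(d,b)$ iff $M_{ij}=0$ whenever $d(i,j)>b$. Block notation: $M(i,j)=M|_{\{n_i,\dots,n_{i+1}-1\}\times\{n_j,\dots,n_{j+1}-1\}}$; block-lower triangular means $M(i,j)=0$ for $i<j$. *)

From HB Require Import structures.
From mathcomp Require Import all_boot all_order all_algebra.
From mathcomp Require Import reals.
Set Implicit Arguments. Unset Strict Implicit. Unset Printing Implicit Defensive.
Import Order.TTheory GRing.Theory Num.Theory.
Local Open Scope ring_scope.

(* Infinite real matrices indexed by nat x nat (0-based indices). *)
Definition mx (R : realType) := nat -> nat -> R.

Section Defs.
Variable R : realType.

Definition idmx : mx R := fun p q => (p == q)%:R.

Definition mxdiff (A B : mx R) : mx R := fun p q => A p q - B p q.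

(* ||A||_2 <= c : operator norm on l_2, tested on finitely supported vectors
   and finite truncations of the image (equivalent to the operator norm). *)
Definition opnorm_le (A : mx R) (c : R) : Prop :=
  0 <= c /\
  forall (m n : nat) (x : nat -> R),
    \sum_(i < m) (\sum_(j < n) A i j * x j) ^+ 2 <= c ^+ 2 * \sum_(j < n) x j ^+ 2.

Definition bounded (A : mx R) : Prop := exists c, opnorm_le A c.

(* Mx . x >= C ||x||^2 (on finitely supported x, dense in l_2). *)
Definition elliptic (M : mx R) : Prop :=
  exists C : R, 0 < C /\
  forall (n : nat) (x : nat -> R),
    C * \sum_(i < n) x i ^+ 2 <= \sum_(i < n) \sum_(j < n) M i j * x j * x i.

(* C = A B entrywise, the series sum_k A p k * B k q being (eventually constant,
   i.e. finite and) equal to C p q. *)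
Definition mxmul_eq (A B C : mx R) : Prop :=
  forall p q, exists N0, forall N, (N0 <= N)%N ->
    C p q = \sum_(k < N) A p k * B k q.

Definition is_metric (d : nat -> nat -> R) : Prop :=
  (forall i j, 0 <= d i j) /\ (forall i j, d i j = 0 <-> i = j) /\
  (forall i j, d i j = d j i) /\ (forall i j k, d i k <= d i j + d j k).

Definition inB (d : nat -> nat -> R) (b : nat) (A : mx R) : Prop :=
  forall i j, b%:R < d i j -> A i j = 0.
End Defs.

(* Block structure: block i = {nb i, ..., nb (i+1) - 1}, nb 0 = 0,
   nb strictly increasing (0-based version of n_1 = 1 < n_2 < ...). *)
Definition block_structure (nb : nat -> nat) : Prop :=
  nb 0 = 0%N /\ forall i, (nb i < nb i.+1)%N.

Definition inblk (nb : nat -> nat) (i p : nat) : bool := (nb i <= p < nb i.+1)%N.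

Section Blocks.
Variables (R : realType) (nb : nat -> nat).

Definition blk_lower (A : mx R) : Prop :=
  forall i j p q, (i < j)%N -> inblk nb i p -> inblk nb j q -> A p q = 0.

Definition blk_upper (A : mx R) : Prop :=
  forall i j p q, (j < i)%N -> inblk nb i p -> inblk nb j q -> A p q = 0.

Definition blk_unit_diag (A : mx R) : Prop :=
  forall i p q, inblk nb i p -> inblk nb i q -> A p q = (p == q)%:R.

Definition blk_band (b : nat) (A : mx R) : Prop :=
  forall i j p q, ((b < i - j) || (b < j - i))%N ->
    inblk nb i p -> inblk nb j q -> A p q = 0.
End Blocks.

(* Let Lam bound ||M||_2 and C be the ellipticity constant.  On every finite
   section M_n, the Richardson matrix B = I - alpha M with alpha = C / Lam^2
   satisfies ||B||^2 <= rho = 1 - C^2 / Lam^2 < 1, and the inverse G_n of M_n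
   is alpha (sum_(m < K) B^m) + B^K G_n.  For p in block i and q in an earlier
   block, L^-1(p, q) = - (M G_(n_i))(p, q) (Schur complement).  Replacing G_(n_i)
   by the truncated Neumann series alpha (sum_(m < k) B^m) gives L_eps^-1: it is
   block lower triangular with identity diagonal blocks and, as B^m lies in
   B(d, m b0) and has block bandwidth m b0, it is banded with b = k b0.  The
   m-th term of the error has norm about rho^(m/2) sqrt((m + 1) b0), so the error
   is O(sigma^k) for some sigma < 1.  Finally L(i, j) = (M G_(n_(j+1)))(i, j) is
   nonzero only for i - b0 <= j < i, so L is bounded, and
   L_eps = L (I + (L^-1 - L_eps^-1) L_eps) bounds L_eps once the error is small. *)

From HB Require Import structures.
From mathcomp Require Import all_boot all_order all_algebra.
From mathcomp Require Import reals.
From mathcomp Require Import zify ring lra.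
Import Order.TTheory GRing.Theory Num.Theory.
Local Open Scope ring_scope.
Set Implicit Arguments. Unset Strict Implicit. Unset Printing Implicit Defensive.

Section SquareSums.
Variable R : realType.

Definition sqnorm (n : nat) (x : nat -> R) : R := \sum_(j < n) x j ^+ 2.

Definition mulv (n : nat) (A : mx R) (x : nat -> R) : nat -> R :=
  fun p => \sum_(c < n) A p c * x c.

Definition trunc (N : nat) (x : nat -> R) : nat -> R :=
  fun q => if (q < N)%N then x q else 0.

Lemma sqnorm_ge0 n x : 0 <= sqnorm n x.
Proof. by apply: sumr_ge0 => i _; apply: sqr_ge0. Qed.

Lemma big_ord_widen_if (n n' : nat) (F : nat -> R) : (n <= n')%N ->
  \sum_(i < n) F i = \sum_(i < n') (if (i < n)%N then F i else 0).
Proof. by move=> H; rewrite (big_ord_widen n' F H) big_mkcond. Qed.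

Lemma big_ord_if_swap (n N : nat) (F : nat -> R) :
  \sum_(q < N) (if (q < n)%N then F q else 0) =
  \sum_(q < n) (if (q < N)%N then F q else 0).
Proof.
rewrite (big_ord_widen_if (fun q => if (q < n)%N then F q else 0) (leq_addr n N)).
rewrite (big_ord_widen_if (fun q => if (q < N)%N then F q else 0) (leq_addl N n)).
by apply: eq_bigr => i _; do 2 case: ifP.
Qed.

Lemma sum_natdelta n p (f : nat -> R) : (p < n)%N ->
  \sum_(c < n) (p == c)%:R * f c = f p.
Proof.
move=> Hp; rewrite (bigD1 (Ordinal Hp)) //= eqxx mul1r big1 ?addr0 // => c Hc.
case: eqP => [E|]; last by rewrite mul0r.
by exfalso; move/negP: Hc; apply; apply/eqP/val_inj.
Qed.

Lemma sum_mul_natdelta n p (f : nat -> R) : (p < n)%N ->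
  \sum_(c < n) f c * ((c : nat) == p)%:R = f p.
Proof.
move=> Hp; rewrite -[RHS](sum_natdelta f Hp); apply: eq_bigr => c _.
by rewrite mulrC eq_sym.
Qed.

Lemma sum_mulA n1 n2 (a : nat -> R) (B : nat -> nat -> R) (c : nat -> R) :
  \sum_(k < n1) a k * (\sum_(l < n2) B k l * c l) =
  \sum_(l < n2) (\sum_(k < n1) a k * B k l) * c l.
Proof.
under eq_bigr => k _ do rewrite mulr_sumr.
rewrite exchange_big /=; apply: eq_bigr => l _; rewrite mulr_suml.
by apply: eq_bigr => k _; rewrite mulrA.
Qed.

Lemma mxmul_eq_trunc (A B P : mx R) N p q : mxmul_eq A B P ->
  (forall k, (N <= k)%N -> A p k = 0) -> \sum_(k < N) A p k * B k q = P p q.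
Proof.
move=> H HA; case: (H p q) => N0 HN0.
rewrite (HN0 (maxn N0 N)) ?leq_maxl // (big_ord_widen_if (fun k => A p k * B k q) (leq_maxr N0 N)).
by apply: eq_bigr => k _; case: ifP => // /negbT; rewrite -leqNgt => /HA ->; rewrite mul0r.
Qed.

Lemma eq_mulv n A x y p :
  (forall c, (c < n)%N -> x c = y c) -> mulv n A x p = mulv n A y p.
Proof. by move=> H; apply: eq_bigr => c _; rewrite H. Qed.

Lemma eq_sqnorm n x y : (forall c, (c < n)%N -> x c = y c) -> sqnorm n x = sqnorm n y.
Proof. by move=> H; apply: eq_bigr => c _; rewrite H. Qed.

Lemma mulv_scaleD n A a x y p :
  mulv n A (fun q => a * x q + y q) p = a * mulv n A x p + mulv n A y p.
Proof. by rewrite /mulv mulr_sumr -big_split /=; apply: eq_bigr => c _; ring. Qed.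

Lemma mulv_sum n k (F : nat -> mx R) y c :
  mulv n (fun c q => \sum_(m < k) F m c q) y c = \sum_(m < k) mulv n (F m) y c.
Proof.
by rewrite /mulv; under eq_bigr => q _ do rewrite mulr_suml; rewrite exchange_big.
Qed.

Lemma mulv_scale n a (H : mx R) y c :
  mulv n (fun c q => a * H c q) y c = a * mulv n H y c.
Proof. by rewrite /mulv mulr_sumr; apply: eq_bigr => q _; rewrite mulrA. Qed.

Lemma mulv_sub n (H1 H2 : mx R) y c :
  mulv n (fun c q => H1 c q - H2 c q) y c = mulv n H1 y c - mulv n H2 y c.
Proof. by rewrite /mulv -sumrB; apply: eq_bigr => q _; rewrite mulrBl. Qed.

Lemma sqnorm_widen n m (v : nat -> R) : (m <= n)%N ->
  sqnorm n (fun c => if (c < m)%N then v c else 0) = sqnorm m v.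
Proof.
move=> h; rewrite /sqnorm (big_ord_widen_if (fun c => v c ^+ 2) h).
by apply: eq_bigr => c _; case: ifP => //; rewrite expr0n.
Qed.

Lemma sqnorm_trunc n N x : sqnorm n (trunc N x) <= sqnorm N x.
Proof.
rewrite /sqnorm (eq_bigr (fun q : 'I_n => if (q < N)%N then x q ^+ 2 else 0)); last first.
  by move=> q _; rewrite /trunc; case: ifP => //; rewrite expr0n.
rewrite -(big_ord_if_swap n N (fun q => x q ^+ 2)); apply: ler_sum => q _.
by case: ifP => _ //; apply: sqr_ge0.
Qed.

Lemma sum_le_sym (I : Type) (r : seq I) (P Q : I -> I -> R) :
  (forall i j, 2 * P i j <= Q i j + Q j i) ->
  \sum_(i <- r) \sum_(j <- r) P i j <= \sum_(i <- r) \sum_(j <- r) Q i j.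
Proof.
move=> H.
have E : \sum_(i <- r) \sum_(j <- r) (Q i j + Q j i) =
         2 * \sum_(i <- r) \sum_(j <- r) Q i j.
  under eq_bigr => i _ do rewrite big_split.
  by rewrite big_split /= [X in _ + X]exchange_big; ring.
rewrite -(@ler_pM2l _ 2) // -E mulr_sumr; apply: ler_sum => i _.
by rewrite mulr_sumr; apply: ler_sum => j _; apply: H.
Qed.

Lemma cauchy_schwarz_weighted a b (x w : nat -> R) : (forall i, 0 < w i) ->
  (\sum_(a <= i < b) x i) ^+ 2 <=
  (\sum_(a <= i < b) w i) * \sum_(a <= i < b) (x i ^+ 2 / w i).
Proof.
move=> Hw; rewrite expr2 !mulr_suml.
under eq_bigr => i _ do rewrite mulr_sumr.
under [X in _ <= X]eq_bigr => i _ do rewrite mulr_sumr.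
apply: sum_le_sym => i j; have wi := Hw i; have wj := Hw j.
rewrite -subr_ge0.
have -> : w i * (x j ^+ 2 / w j) + w j * (x i ^+ 2 / w i) - 2 * (x i * x j)
   = (w i * x j - w j * x i) ^+ 2 / (w i * w j) :> R.
  by field; apply/andP; split; apply: lt0r_neq0.
by rewrite divr_ge0 ?sqr_ge0 // mulr_ge0 // ltW.
Qed.

Lemma cauchy_schwarz n (x y : nat -> R) :
  (\sum_(i < n) x i * y i) ^+ 2 <= sqnorm n x * sqnorm n y.
Proof.
rewrite /sqnorm expr2 !mulr_suml.
under eq_bigr => i _ do rewrite mulr_sumr.
under [X in _ <= X]eq_bigr => i _ do rewrite mulr_sumr.
apply: sum_le_sym => i j; rewrite -subr_ge0.
have -> : x i ^+ 2 * y j ^+ 2 + x j ^+ 2 * y i ^+ 2 - 2 * (x i * y i * (x j * y j))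
  = (x i * y j - x j * y i) ^+ 2 by ring.
exact: sqr_ge0.
Qed.

Lemma sqnorm_add_le n x y :
  sqnorm n (fun p => x p + y p) <= 2 * sqnorm n x + 2 * sqnorm n y.
Proof.
rewrite /sqnorm !mulr_sumr -big_split /=; apply: ler_sum => i _.
rewrite -subr_ge0.
have -> : 2 * x i ^+ 2 + 2 * y i ^+ 2 - (x i + y i) ^+ 2 = (x i - y i) ^+ 2 by ring.
exact: sqr_ge0.
Qed.

Lemma opnorm_le_sqnorm (F : mx R) c : 0 <= c ->
  (forall N x, sqnorm N (mulv N F x) <= c ^+ 2 * sqnorm N x) -> opnorm_le F c.
Proof.
move=> c0 H; split => // m n x; set N := maxn m n.
have E1 i : \sum_(j < n) F i j * x j = mulv N F (trunc n x) i.
  rewrite /mulv (big_ord_widen_if (fun j => F i j * x j) (leq_maxr m n)).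
  by apply: eq_bigr => j _; rewrite /trunc; case: ifP; rewrite ?mulr0.
rewrite -/(sqnorm n x) -(sqnorm_widen x (leq_maxr m n)); apply: le_trans (H N (trunc n x)).
rewrite /sqnorm (big_ord_widen_if (fun i => (\sum_(j < n) F i j * x j) ^+ 2) (leq_maxl m n)).
by apply: ler_sum => i _; rewrite E1; case: ifP => _ //; apply: sqr_ge0.
Qed.

Lemma opnorm_le_succ (F : mx R) a : 0 <= a ->
  (forall N x, sqnorm N (mulv N F x) <= a * sqnorm N x) -> opnorm_le F (a + 1).
Proof.
move=> a0 H; apply: opnorm_le_sqnorm; first by rewrite addr_ge0.
move=> N x; apply: le_trans (H N x) _; rewrite ler_wpM2r ?sqnorm_ge0 //.
by rewrite -subr_ge0 (_ : _ - a = a ^+ 2 + a + 1) ?addr_ge0 ?sqr_ge0 //; ring.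
Qed.

Lemma geometric_tail_le (s : R) k K : 0 <= s < 1 ->
  \sum_(k <= m < K) s ^+ m <= s ^+ k / (1 - s).
Proof.
move=> /andP [s0 s1]; have H1 : 0 < 1 - s by rewrite subr_gt0.
rewrite ler_pdivlMr //.
have E j : (\sum_(k <= i < k + j) s ^+ i) * (1 - s) = s ^+ k - s ^+ (k + j).
  elim: j => [|j IH]; first by rewrite addn0 big_geq // mul0r subrr.
  by rewrite addnS big_nat_recr /= ?leq_addr // mulrDl IH exprS; ring.
have [HK|/ltnW HK] := leqP K k; first by rewrite big_geq // mul0r exprn_ge0.
by rewrite -(subnKC HK) E lerBlDr lerDl exprn_ge0.
Qed.

Lemma natmul_expr_le (t : R) m : 0 <= t < 1 -> m.+1%:R * t ^+ m <= (1 - t)^-1.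
Proof.
move=> t01; have /andP [t0 t1] := t01.
apply: le_trans (_ : \sum_(0 <= i < m.+1) t ^+ i <= _).
  rewrite mulr_natl -[X in _ *+ X](subn0 m.+1) -sumr_const_nat.
  by apply: ler_sum_nat => i /andP [_ hi]; apply: ler_wiXn2l => //; apply: ltW.
by have := geometric_tail_le 0 m.+1 t01; rewrite expr0 div1r.
Qed.

Lemma expr_le_small (s e : R) : 0 <= s < 1 -> 0 < e -> exists k : nat, s ^+ k <= e.
Proof.
move=> s01 e0; have /andP [_ s1] := s01; have s1' : 0 < 1 - s by rewrite subr_gt0.
set a := (1 - s)^-1; have a0 : 0 < a by rewrite invr_gt0.
have [k Hk] : exists k : nat, a / e < k.+1%:R.
  exists (Num.Def.archi_bound (a / e)); apply: lt_trans (archi_boundP _) _.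
    by rewrite divr_ge0 ?ltW.
  by rewrite ltr_nat.
exists k; apply: le_trans (_ : a / k.+1%:R <= e).
  by rewrite ler_pdivlMr ?ltr0n // mulrC; apply: natmul_expr_le.
by move: Hk; rewrite ler_pdivrMr ?ltr0n // ltr_pdivrMr // mulrC => /ltW.
Qed.
End SquareSums.

Section Blocks.
Variable nb : nat -> nat.
Hypothesis Hnb : block_structure nb.

Lemma nb_ltn i j : (i < j)%N -> (nb i < nb j)%N.
Proof.
case: Hnb => _ H; elim: j => // j IH; rewrite ltnS leq_eqVlt => /orP [/eqP ->|/IH];
  first exact: H.
by move=> h; apply: ltn_trans h (H j).
Qed.

Lemma nb_leq i j : (i <= j)%N -> (nb i <= nb j)%N.
Proof. by rewrite leq_eqVlt => /orP [/eqP ->//|/nb_ltn/ltnW]. Qed.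

Lemma leq_nb i : (i <= nb i)%N.
Proof. by case: Hnb => H0 H; elim: i => // i IH; apply: leq_ltn_trans IH (H i). Qed.

Lemma blk_exists p : exists i, (p < nb i.+1)%N.
Proof. by exists p; apply: leq_trans (leq_nb p.+1). Qed.

Definition blk p := ex_minn (blk_exists p).

Lemma blkP p : (nb (blk p) <= p < nb (blk p).+1)%N.
Proof.
rewrite /blk; case: ex_minnP => i Hi Hmin; rewrite Hi andbT.
case: i Hi Hmin => [|i] Hi Hmin; first by case: Hnb => ->.
by rewrite leqNgt; apply/negP => /Hmin; lia.
Qed.

Lemma blk_uniq i p : (nb i <= p < nb i.+1)%N -> blk p = i.
Proof.
move=> /andP [H1 H2]; case/andP: (blkP p) => H3 H4.
by case: (ltngtP (blk p) i) => // /nb_leq; lia.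
Qed.

Lemma inblkE i p : inblk nb i p = (blk p == i).
Proof. by apply/idP/eqP => [/blk_uniq|<-] //; apply: blkP. Qed.

Lemma ltn_blk q i : (q < nb i)%N = (blk q < i)%N.
Proof.
case/andP: (blkP q) => H1 H2.
case: (ltnP (blk q) i) => H; first by apply: leq_trans H2 (nb_leq H).
by apply/negbTE; rewrite -leqNgt; apply: leq_trans (nb_leq H) H1.
Qed.

Lemma blk_leq p : (blk p <= p)%N.
Proof. by case/andP: (blkP p) => H1 _; apply: leq_trans (leq_nb _) H1. Qed.

Lemma leq_blk p q : (p <= q)%N -> (blk p <= blk q)%N.
Proof.
move=> H; rewrite leqNgt; apply/negP => /nb_leq.
by case/andP: (blkP q) => _ H2; case/andP: (blkP p) => H3 _; lia.
Qed.

Lemma ltn_of_blk p q : (blk p < blk q)%N -> (p < q)%N.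
Proof. by move=> H; rewrite ltnNge; apply/negP => /leq_blk; lia. Qed.

Lemma blk_ltn_nb p k N : (nb (blk p).+1 <= N)%N -> (N <= k)%N -> (blk p < blk k)%N.
Proof. by move=> h1 h2; rewrite ltnNge -ltnS -ltn_blk -leqNgt (leq_trans h1 h2). Qed.

Lemma blk_lowerP (R : realType) (A : mx R) :
  blk_lower nb A -> forall p q, (blk p < blk q)%N -> A p q = 0.
Proof. by move=> H p q h; apply: (H _ _ _ _ h (blkP p) (blkP q)). Qed.

Section BlockUnitLower.
Variables (R : realType) (A : mx R).
Hypotheses (HAlow : blk_lower nb A) (HAdiag : blk_unit_diag nb A).

Lemma blk_unit_diagP p q : blk p = blk q -> A p q = (p == q)%:R.
Proof. by move=> h; apply: (HAdiag (blkP p)); rewrite h; apply: blkP. Qed.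

Lemma blk_unit_lower_split p q :
  A p q = (p == q)%:R + (if (blk q < blk p)%N then A p q else 0).
Proof.
case: ifP => h.
  by rewrite (_ : (p == q) = false) ?add0r //; apply: contraTF h => /eqP ->; rewrite ltnn.
rewrite addr0; case: (ltngtP (blk p) (blk q)) => h'; last exact: blk_unit_diagP.
- by rewrite (blk_lowerP HAlow h'); case: eqP => // E; rewrite E ltnn in h'.
- by rewrite h' in h.
Qed.

Lemma blk_unit_lower_ltri p q : (p < q)%N -> A p q = 0.
Proof.
move=> h; rewrite blk_unit_lower_split ifN; last by rewrite -leqNgt leq_blk // ltnW.
by rewrite addr0; case: eqP => // E; rewrite E ltnn in h.
Qed.
End BlockUnitLower.

Lemma blk_bandP (R : realType) b (A : mx R) : blk_band nb b A ->
  forall p q, ((b < blk p - blk q) || (b < blk q - blk p))%N -> A p q = 0.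
Proof. by move=> H p q h; apply: (H _ _ _ _ h (blkP p) (blkP q)). Qed.
End Blocks.

Section UnitLowerInverse.
Variables (R : realType) (A : mx R).
Hypotheses (HAup : forall p q, (p < q)%N -> A p q = 0) (HAd : forall p, A p p = 1).

(* Forward substitution: ltri_inv_col q n lists the first n entries of column q. *)
Fixpoint ltri_inv_col (q n : nat) : seq R :=
  if n is n'.+1 then
    rcons (ltri_inv_col q n')
      ((n' == q)%:R - \sum_(k < n') A n' k * nth 0 (ltri_inv_col q n') k)
  else [::].

Definition ltri_inv : mx R := fun p q => nth 0 (ltri_inv_col q p.+1) p.

Lemma size_ltri_inv_col q n : size (ltri_inv_col q n) = n.
Proof. by elim: n => //= n IH; rewrite size_rcons IH. Qed.

Lemma nth_ltri_inv_col q n k : (k < n)%N -> nth 0 (ltri_inv_col q n) k = ltri_inv k q.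
Proof.
elim: n => // n IH hk /=; rewrite nth_rcons size_ltri_inv_col.
case: (ltnP k n) => h; first exact: IH.
have -> : k = n by lia.
by rewrite /ltri_inv /= nth_rcons size_ltri_inv_col ltnn eqxx.
Qed.

Lemma ltri_invE p q : ltri_inv p q = (p == q)%:R - \sum_(k < p) A p k * ltri_inv k q.
Proof.
rewrite /ltri_inv /= nth_rcons size_ltri_inv_col ltnn eqxx; congr (_ - _).
by apply: eq_bigr => k _; rewrite nth_ltri_inv_col.
Qed.

Lemma ltri_inv_up p q : (p < q)%N -> ltri_inv p q = 0.
Proof.
elim/ltn_ind: p => p IH h; rewrite ltri_invE big1 ?subr0 => [|k _].
  by case: eqP => // E; rewrite E ltnn in h.
by rewrite IH ?mulr0 // (ltn_trans _ h).
Qed.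

Lemma sum_A_ltri_inv N p q : (p < N)%N -> \sum_(k < N) A p k * ltri_inv k q = (p == q)%:R.
Proof.
move=> hp; transitivity (\sum_(k < N) (if (k < p.+1)%N then A p k * ltri_inv k q else 0)).
  by apply: eq_bigr => k _; case: ifP => // /negbT; rewrite -leqNgt => h; rewrite HAup ?mul0r.
rewrite -(big_ord_widen_if (fun k => A p k * ltri_inv k q) hp).
by rewrite big_ord_recr /= HAd mul1r [ltri_inv p q]ltri_invE; ring.
Qed.

Lemma mxmul_A_ltri_inv : mxmul_eq A ltri_inv (@idmx R).
Proof. by move=> p q; exists p.+1 => N hN; rewrite sum_A_ltri_inv. Qed.

Lemma mxmul_ltri_inv_A : mxmul_eq ltri_inv A (@idmx R).
Proof.
move=> p q; exists p.+1 => N hN; set n := maxn N q.+1.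
have hpn : (p < n)%N by apply: leq_trans hN (leq_maxl _ _).
have hqn : (q < n)%N by apply: leq_maxr.
pose Am : 'M[R]_n := \matrix_(i, j) A i j.
pose Xm : 'M[R]_n := \matrix_(i, j) ltri_inv i j.
have AX : Am *m Xm = 1%:M.
  apply/matrixP => i j; rewrite !mxE; under eq_bigr => k _ do rewrite !mxE.
  by rewrite sum_A_ltri_inv.
have := congr1 (fun B : 'M[R]_n => B (Ordinal hpn) (Ordinal hqn)) (mulmx1C AX).
rewrite !mxE /= /idmx => <-.
rewrite (big_ord_widen_if (fun k => ltri_inv p k * A k q) (leq_maxl N q.+1)).
apply: eq_bigr => k _; rewrite !mxE; case: ifP => // /negbT; rewrite -leqNgt => h.
by rewrite ltri_inv_up ?mul0r // (leq_trans hN h).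
Qed.

Lemma mulv_A_ltri_inv N y p : (p < N)%N -> mulv N A (mulv N ltri_inv y) p = y p.
Proof.
move=> hp; rewrite /mulv (sum_mulA _ _ (A p) ltri_inv y) -[RHS](sum_natdelta y hp).
by apply: eq_bigr => r _; rewrite sum_A_ltri_inv.
Qed.
End UnitLowerInverse.

Lemma elliptic_mulv (R : realType) (M : mx R) C :
  (forall n (x : nat -> R),
     C * \sum_(i < n) x i ^+ 2 <= \sum_(i < n) \sum_(j < n) M i j * x j * x i) ->
  forall n x, C * sqnorm n x <= \sum_(i < n) mulv n M x i * x i.
Proof.
move=> H n x.
suff -> : \sum_(i < n) mulv n M x i * x i = \sum_(i < n) \sum_(j < n) M i j * x j * x i.
  exact: H.
by apply: eq_bigr => i _; rewrite mulr_suml.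
Qed.

Lemma bounded_elliptic_constants (R : realType) (M : mx R) : bounded M -> elliptic M ->
  exists Lam C : R, [/\ 0 < C, C < Lam,
    forall m n x, sqnorm m (mulv n M x) <= Lam ^+ 2 * sqnorm n x &
    forall n x, C * sqnorm n x <= \sum_(i < n) mulv n M x i * x i].
Proof.
move=> [c [c0 Hc]] [C [HC Hell]]; exists (c + C + 1), C; split => //.
- by lra.
- move=> m n x; apply: le_trans (Hc m n x) _; rewrite ler_wpM2r ?sqnorm_ge0 //.
  by rewrite ler_sqr ?nnegrE; lra.
- exact: elliptic_mulv.
Qed.

Section Approximation.
Variables (R : realType) (M : mx R) (Lam C : R).
Hypotheses (HC : 0 < C) (HCLam : C < Lam).
Hypothesis HMbound : forall m n x, sqnorm m (mulv n M x) <= Lam ^+ 2 * sqnorm n x.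
Hypothesis HMell : forall n x, C * sqnorm n x <= \sum_(i < n) mulv n M x i * x i.
Variables (nb : nat -> nat) (Hnb : block_structure nb) (d : nat -> nat -> R) (b0 : nat).
Hypotheses (HMband : blk_band nb b0 M) (HMd : inB d b0 M).
Hypotheses (Hd0 : forall p, d p p = 0) (Hdtri : forall i j k, d i k <= d i j + d j k).
Local Notation blk := (blk Hnb).
Local Notation ltn_blk := (@ltn_blk _ Hnb).

Lemma Lam_gt0 : 0 < Lam. Proof. exact: lt_trans HCLam. Qed.

Definition alpha := C / Lam ^+ 2.
Definition rho := 1 - C ^+ 2 / Lam ^+ 2.

Lemma alpha_ge0 : 0 <= alpha.
Proof. by rewrite divr_ge0 ?exprn_ge0 ?ltW ?Lam_gt0. Qed.

Lemma rho_ge0 : 0 <= rho.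
Proof.
have L2 : 0 < Lam ^+ 2 by rewrite exprn_gt0 ?Lam_gt0.
by rewrite subr_ge0 ler_pdivrMr // mul1r lerXn2r ?nnegrE ?ltW ?Lam_gt0.
Qed.

Lemma rho_lt1 : rho < 1.
Proof. by rewrite ltrBlDr ltrDl divr_gt0 // exprn_gt0 ?Lam_gt0. Qed.

Lemma rho_bounds : 0 <= rho < 1.
Proof. by rewrite rho_ge0 rho_lt1. Qed.

Definition Bmx : mx R := fun p q => (p == q)%:R - alpha * M p q.

Fixpoint Bpow (n m : nat) : mx R :=
  if m is m'.+1 then fun p q => \sum_(c < n) Bpow n m' p c * Bmx c q else @idmx R.

Lemma mulv_Bmx n x p : (p < n)%N -> mulv n Bmx x p = x p - alpha * mulv n M x p.
Proof.
move=> Hp; rewrite /mulv /Bmx; under eq_bigr => c _ do rewrite mulrBl.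
by rewrite sumrB sum_natdelta // mulr_sumr; congr (_ - _); apply: eq_bigr => c _; rewrite mulrA.
Qed.

Lemma mulv_BpowS n m x p : mulv n (Bpow n m.+1) x p = mulv n (Bpow n m) (mulv n Bmx x) p.
Proof. by rewrite /mulv /= sum_mulA. Qed.

Lemma mulv_Bpow0 n x p : (p < n)%N -> mulv n (Bpow n 0) x p = x p.
Proof. by move=> Hp; rewrite /mulv /= /idmx sum_natdelta. Qed.

Lemma sqnorm_Bmx n x : sqnorm n (mulv n Bmx x) <= rho * sqnorm n x.
Proof.
have L2 : 0 < Lam ^+ 2 by rewrite exprn_gt0 ?Lam_gt0.
rewrite (eq_sqnorm (y := fun p => x p - alpha * mulv n M x p)); last by move=> c /mulv_Bmx->.
have -> : sqnorm n (fun p => x p - alpha * mulv n M x p) = sqnorm n x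
    - 2 * alpha * \sum_(i < n) mulv n M x i * x i + alpha ^+ 2 * sqnorm n (mulv n M x).
  rewrite /sqnorm mulr_sumr -sumrB mulr_sumr -big_split /=; apply: eq_bigr => i _; ring.
have -> : rho * sqnorm n x =
    sqnorm n x - 2 * alpha * (C * sqnorm n x) + alpha ^+ 2 * (Lam ^+ 2 * sqnorm n x).
  by rewrite /rho /alpha; field; apply: lt0r_neq0 Lam_gt0.
have a0 := alpha_ge0.
have h1 := ler_wpM2l (mulr_ge0 (ler0n _ 2) a0) (HMell n x).
have h2 := ler_wpM2l (exprn_ge0 2 a0) (HMbound n n x).
lra.
Qed.

Lemma sqnorm_Bpow n m x : sqnorm n (mulv n (Bpow n m) x) <= rho ^+ m * sqnorm n x.
Proof.
elim: m x => [|m IH] x; first by rewrite expr0 mul1r (eq_sqnorm (y := x)) // => c /mulv_Bpow0.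
rewrite (eq_sqnorm (y := mulv n (Bpow n m) (mulv n Bmx x))) => [|c _]; last exact: mulv_BpowS.
apply: le_trans (IH _) _; rewrite exprSr -mulrA ler_wpM2l ?exprn_ge0 ?rho_ge0 //.
exact: sqnorm_Bmx.
Qed.

Lemma Bpow_neumann n (y w : nat -> R) :
  (forall p, (p < n)%N -> mulv n M w p = y p) ->
  forall K c, (c < n)%N ->
   w c = alpha * \sum_(m < K) mulv n (Bpow n m) y c + mulv n (Bpow n K) w c.
Proof.
move=> Hw; elim=> [|K IH] c Hc; first by rewrite big_ord0 mulr0 add0r mulv_Bpow0.
rewrite IH // big_ord_recr /= mulrDr -addrA mulv_BpowS; congr (_ + _).
rewrite (@eq_mulv _ n (Bpow n K) w (fun q => alpha * y q + mulv n Bmx w q) c).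
  exact: mulv_scaleD.
by move=> q Hq; rewrite mulv_Bmx // Hw //; ring.
Qed.

Definition Msec n : 'M[R]_n := \matrix_(i, j) M i j.

Lemma Msec_unit n : Msec n \in unitmx.
Proof.
rewrite -row_free_unit; apply/inj_row_free => v Hv.
pose x q := if (insub q : option 'I_n) is Some k then v 0 k else 0.
have xk (k : 'I_n) : x k = v 0 k by rewrite /x valK.
have E0 : \sum_(i < n) mulv n M x i * x i = 0.
  rewrite /mulv; under eq_bigr => i _ do rewrite mulr_suml.
  rewrite exchange_big /=; apply: big1 => j _.
  have := congr1 (fun A : 'rV[R]_n => A 0 j) Hv; rewrite !mxE => Hj.
  transitivity (x j * \sum_i v 0 i * Msec n i j); last by rewrite Hj mulr0.
  by rewrite mulr_sumr; apply: eq_bigr => i _; rewrite mxE !xk; ring.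
have := HMell n x; rewrite E0 pmulr_rle0 // => S0.
have /eqP : sqnorm n x = 0 by apply/eqP; rewrite eq_le S0 sqnorm_ge0.
rewrite psumr_eq0 => [/allP Hx|i _]; last exact: sqr_ge0.
apply/rowP => k; rewrite mxE -xk; apply/eqP; rewrite -sqrf_eq0.
exact: (implyP (Hx k (mem_index_enum k))).
Qed.

Definition Ginv n (p q : nat) : R :=
  match (insub p : option 'I_n), (insub q : option 'I_n) with
  | Some i, Some j => invmx (Msec n) i j
  | _, _ => 0
  end.

Lemma Ginv_ord n (i j : 'I_n) : Ginv n i j = invmx (Msec n) i j.
Proof. by rewrite /Ginv !valK. Qed.

Lemma sum_M_Ginv n p q : (p < n)%N -> (q < n)%N ->
  \sum_(k < n) M p k * Ginv n k q = (p == q)%:R.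
Proof.
move=> Hp Hq.
have := congr1 (fun A : 'M[R]_n => A (Ordinal Hp) (Ordinal Hq)) (mulmxV (Msec_unit n)).
rewrite !mxE /= => <-; apply: eq_bigr => k _.
by rewrite mxE -(Ginv_ord k (Ordinal Hq)).
Qed.

Lemma mulv_M_Ginv n y p : (p < n)%N -> mulv n M (mulv n (Ginv n) y) p = y p.
Proof.
move=> Hp; rewrite /mulv sum_mulA -[RHS](sum_natdelta y Hp).
by apply: eq_bigr => q _; rewrite sum_M_Ginv.
Qed.

Lemma sqnorm_Ginv n y : C ^+ 2 * sqnorm n (mulv n (Ginv n) y) <= sqnorm n y.
Proof.
set w := mulv n (Ginv n) y.
have H1 : C * sqnorm n w <= \sum_(i < n) y i * w i.
  rewrite (eq_bigr (fun i : 'I_n => mulv n M w i * w i)) => [|i _]; first exact: HMell.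
  by rewrite /w mulv_M_Ginv.
have H3 : (C * sqnorm n w) ^+ 2 <= sqnorm n y * sqnorm n w.
  have c0 : 0 <= C * sqnorm n w := mulr_ge0 (ltW HC) (sqnorm_ge0 _ _).
  by apply: le_trans (cauchy_schwarz n y w); rewrite ler_sqr ?nnegrE // (le_trans c0 H1).
have [->|wn0] := eqVneq (sqnorm n w) 0; first by rewrite mulr0 sqnorm_ge0.
have wp : 0 < sqnorm n w by rewrite lt_def wn0 sqnorm_ge0.
by rewrite -(ler_pM2r wp); move: H3; rewrite exprMn expr2 mulrA.
Qed.

Lemma Bpow_band n m c q :
  ((blk q + m * b0 < blk c) || (blk c + m * b0 < blk q))%N -> Bpow n m c q = 0.
Proof.
elim: m q => [|m IH] q H /=; first by rewrite /idmx; case: eqP H => // ->; lia.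
apply: big1 => c' _.
have [/IH->|Hc'] := boolP ((blk c' + m * b0 < blk c) || (blk c + m * b0 < blk c'))%N;
  first by rewrite mul0r.
rewrite /Bmx (blk_bandP HMband) ?mulr0 ?subr0; last by move: H Hc'; rewrite mulSn; lia.
by case: eqP => [E|]; rewrite ?mulr0 //; move: H Hc'; rewrite E mulSn; lia.
Qed.

Lemma Bpow_dist n m c q : (m * b0)%:R < d c q -> Bpow n m c q = 0.
Proof.
elim: m q => [|m IH] q H /=.
  by rewrite /idmx; case: eqP H => // ->; rewrite Hd0 mul0n ltxx.
apply: big1 => c' _.
have [/IH->|] := ltP (m * b0)%:R (d c c'); first by rewrite mul0r.
move=> Hc'; rewrite /Bmx HMd ?mulr0 ?subr0.
  case: eqP => [E|]; rewrite ?mulr0 //; move: H; rewrite -E ltNge => /negP; case.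
  by apply: le_trans Hc' _; rewrite ler_nat leq_mul.
rewrite ltNge; apply/negP => H2; move: H; rewrite ltNge => /negP; apply.
by apply: le_trans (Hdtri c c' q) _; rewrite mulSn natrD addrC lerD.
Qed.

Lemma sqnorm_M_blockwise N n (z : nat -> nat -> R) :
  \sum_(p < N) (\sum_(c < n) M p c * z (blk p) c) ^+ 2 <= Lam ^+ 2 * \sum_(i < N) sqnorm n (z i).
Proof.
pose F p i := (\sum_(c < n) M p c * z i c) ^+ 2.
rewrite (eq_bigr (fun p : 'I_N => \sum_(i < N) (blk p == i)%:R * F p i)); last first.
  by move=> p _; rewrite (sum_natdelta (F p)) // (leq_ltn_trans (blk_leq Hnb p)).
rewrite exchange_big /= mulr_sumr; apply: ler_sum => i _.
apply: le_trans (HMbound N n (z i)); apply: ler_sum => p _.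
by rewrite /F; case: eqP => _; rewrite ?mul1r ?mul0r ?sqr_ge0.
Qed.

Lemma count_window_le N a w :
  \sum_(i < N) (if (a <= i <= a + w)%N then (1 : R) else 0) <= w.+1%:R.
Proof.
apply: le_trans (_ : (minn (N - a) w.+1)%:R <= _); last by rewrite ler_nat geq_minr.
elim: N => [|N IH]; first by rewrite big_ord0.
rewrite big_ord_recr /=; case: ifP => h; last by rewrite addr0 (le_trans IH) // ler_nat; lia.
by apply: le_trans (lerD IH (lexx 1)) _; rewrite natr1 ler_nat; lia.
Qed.

Lemma sum_window_le N N' w (x : nat -> R) :
  \sum_(i < N) \sum_(q < N') (if (blk q <= i <= blk q + w)%N then x q ^+ 2 else 0)
  <= w.+1%:R * sqnorm N' x.
Proof.
rewrite exchange_big /= /sqnorm mulr_sumr; apply: ler_sum => q _.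
rewrite (eq_bigr (fun i : 'I_N => x q ^+ 2 * if (blk q <= i <= blk q + w)%N then 1 else 0));
  last by move=> i _; case: ifP; rewrite ?mulr1 ?mulr0.
by rewrite -mulr_sumr mulrC ler_wpM2r ?sqr_ge0 ?count_window_le.
Qed.

Lemma sum_prev_blocks N (x : nat -> R) p (F : nat -> R) :
  \sum_(q < N) (if (blk q < blk p)%N then F q else 0) * x q =
  \sum_(q < nb (blk p)) F q * trunc N x q.
Proof.
rewrite (eq_bigr (fun q : 'I_N => if (q < nb (blk p))%N then F q * x q else 0)); last first.
  by move=> q _; rewrite ltn_blk; case: ifP; rewrite ?mul0r.
rewrite (big_ord_if_swap (nb (blk p)) N (fun q => F q * x q)); apply: eq_bigr => q _.
by rewrite /trunc; case: ifP; rewrite ?mulr0.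
Qed.

Lemma sum_blocks_range n a b (f : nat -> R) :
  \sum_(q < n) (if (a <= blk q < b)%N then f q else 0) =
  \sum_(a <= j < b) \sum_(q < n) (if blk q == j then f q else 0).
Proof.
elim: b => [|b IH]; first by rewrite big_geq // big1 // => q _; rewrite ltn0 andbF.
have [hab|hab] := leqP a b; last by rewrite big_geq // big1 // => q _; case: ifP => //; lia.
rewrite big_nat_recr //= -IH -big_split /=; apply: eq_bigr => q _.
by case: ifP => H1; case: ifP => H2; case: ifP => H3; rewrite ?addr0 ?add0r //;
  exfalso; move: H1 H2 H3; lia.
Qed.

Definition schur_lower (F : nat -> mx R) : mx R := fun p q =>
  if (blk q < blk p)%N then - \sum_(c < nb (blk p)) M p c * F (nb (blk p)) c q else 0.

Lemma mulv_schur_lower F N x p :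
  mulv N (schur_lower F) x p =
  - \sum_(c < nb (blk p)) M p c * mulv (nb (blk p)) (F (nb (blk p))) (trunc N x) c.
Proof.
rewrite /mulv /schur_lower.
rewrite (sum_prev_blocks N x p (fun q => - \sum_(c < nb (blk p)) M p c * F (nb (blk p)) c q)).
by under eq_bigr => q _ do rewrite mulNr; rewrite sumrN sum_mulA.
Qed.

Definition neumann k n : mx R := fun c q => alpha * \sum_(m < k) Bpow n m c q.

Definition Linv_apx k : mx R := fun p q => (p == q)%:R + schur_lower (neumann k) p q.

Definition neumann_term N x m p :=
  - (alpha * \sum_(c < nb (blk p)) M p c * mulv (nb (blk p)) (Bpow (nb (blk p)) m) (trunc N x) c).

Definition neumann_rem N x K p :=
  - \sum_(c < nb (blk p)) M p c *
      mulv (nb (blk p)) (Bpow (nb (blk p)) K) (mulv (nb (blk p)) (Ginv (nb (blk p))) (trunc N x)) c.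

Lemma mulv_neumann_lower k N x p :
  mulv N (schur_lower (neumann k)) x p = \sum_(m < k) neumann_term N x m p.
Proof.
rewrite mulv_schur_lower /neumann_term sumrN; congr (- _).
under eq_bigr => c _ do rewrite mulv_scale mulv_sum mulr_sumr mulr_sumr.
rewrite exchange_big /=; apply: eq_bigr => m _.
by rewrite mulr_sumr; apply: eq_bigr => c _; ring.
Qed.

Lemma mulv_Linv_apx k N x p : (p < N)%N ->
  mulv N (Linv_apx k) x p = x p + \sum_(m < k) neumann_term N x m p.
Proof.
move=> Hp; rewrite -mulv_neumann_lower /mulv -(sum_natdelta x Hp) -big_split /=.
by apply: eq_bigr => q _; rewrite mulrDl.
Qed.

Definition neumann_vec N x m i c :=
  if ((c < nb i) && (i - b0 <= blk c))%N
  then alpha * mulv (nb i) (Bpow (nb i) m) (trunc N x) c else 0.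

Lemma neumann_term_vec N x m p : (p < N)%N ->
  neumann_term N x m p ^+ 2 = (\sum_(c < nb N) M p c * neumann_vec N x m (blk p) c) ^+ 2.
Proof.
move=> hp; rewrite /neumann_term sqrrN mulr_sumr; congr (_ ^+ 2).
have hn : (nb (blk p) <= nb N)%N by rewrite nb_leq // ltnW // (leq_ltn_trans (blk_leq Hnb p)).
rewrite (big_ord_widen_if (fun c =>
  alpha * (M p c * mulv (nb (blk p)) (Bpow (nb (blk p)) m) (trunc N x) c)) hn).
apply: eq_bigr => c _; rewrite /neumann_vec.
case: ifP => hc /=; last by rewrite mulr0.
case: ifP => hc2; first by ring.
rewrite (blk_bandP HMband) ?mul0r ?mulr0 //.
by apply/orP; left; move/negbT: hc2; rewrite -ltnNge; lia.
Qed.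

Lemma sqnorm_neumann_vec N x m i : (i < N)%N ->
  sqnorm (nb N) (neumann_vec N x m i) <= alpha ^+ 2 * rho ^+ m *
    \sum_(q < N) (if (blk q <= i <= blk q + m.+1 * b0)%N then x q ^+ 2 else 0).
Proof.
move=> hi; have hn : (nb i <= nb N)%N by rewrite nb_leq // ltnW.
pose y q := if (i - m.+1 * b0 <= blk q)%N then trunc N x q else 0.
apply: le_trans (_ : alpha ^+ 2 * sqnorm (nb i) (mulv (nb i) (Bpow (nb i) m) y) <= _).
  rewrite /sqnorm (big_ord_widen_if (fun c => mulv (nb i) (Bpow (nb i) m) y c ^+ 2) hn).
  rewrite mulr_sumr; apply: ler_sum => c _.
  rewrite /neumann_vec; case: ifP => [/andP [hc1 hc2]|hc]; last first.
    by rewrite expr0n /= mulr_ge0 ?sqr_ge0 //; case: ifP; rewrite ?sqr_ge0.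
  rewrite hc1 exprMn ler_wpM2l ?sqr_ge0 //.
  rewrite (_ : mulv _ _ (trunc N x) c = mulv (nb i) (Bpow (nb i) m) y c) //.
  apply: eq_bigr => q _; rewrite /y; case: ifP => // hq.
  rewrite Bpow_band ?mul0r //; apply/orP; left; move/negbT: hq; rewrite -ltnNge => hq.
  by move: hc2 hq; rewrite mulSn; lia.
rewrite -mulrA; apply: ler_wpM2l; first exact: sqr_ge0.
apply: le_trans (sqnorm_Bpow _ _ _) _; apply: ler_wpM2l; first by rewrite exprn_ge0 ?rho_ge0.
rewrite /sqnorm (eq_bigr (fun q : 'I_(nb i) => if (q < N)%N then
      (if (i - m.+1 * b0 <= blk q)%N then x q ^+ 2 else 0) else 0)); last first.
  by move=> q _; rewrite /y /trunc; do 2 case: ifP => //; rewrite ?expr0n.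
rewrite -(big_ord_if_swap (nb i) N (fun q => if (i - m.+1 * b0 <= blk q)%N then x q ^+ 2 else 0)).
apply: ler_sum => q _.
case: ifP => hq; last by case: ifP => _ //; apply: sqr_ge0.
case: ifP => hq2; last by case: ifP => _ //; apply: sqr_ge0.
by rewrite ifT //; move: hq; rewrite ltn_blk => hq; apply/andP; split; lia.
Qed.

Lemma neumann_term_sq_le N x m :
  \sum_(p < N) neumann_term N x m p ^+ 2 <=
  Lam ^+ 2 * alpha ^+ 2 * rho ^+ m * (m.+1 * b0).+1%:R * sqnorm N x.
Proof.
rewrite (eq_bigr (fun p : 'I_N => (\sum_(c < nb N) M p c * neumann_vec N x m (blk p) c) ^+ 2));
  last by move=> p _; rewrite neumann_term_vec.
apply: le_trans (sqnorm_M_blockwise N (nb N) (neumann_vec N x m)) _.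
have -> : Lam ^+ 2 * alpha ^+ 2 * rho ^+ m * (m.+1 * b0).+1%:R * sqnorm N x =
  Lam ^+ 2 * (alpha ^+ 2 * rho ^+ m * ((m.+1 * b0).+1%:R * sqnorm N x)) by ring.
apply: ler_wpM2l; first exact: sqr_ge0.
apply: le_trans (_ : \sum_(i < N) (alpha ^+ 2 * rho ^+ m *
     \sum_(q < N) (if (blk q <= i <= blk q + m.+1 * b0)%N then x q ^+ 2 else 0)) <= _).
  by apply: ler_sum => i _; apply: sqnorm_neumann_vec.
rewrite -mulr_sumr; apply: ler_wpM2l; last exact: sum_window_le.
by rewrite mulr_ge0 ?sqr_ge0 ?exprn_ge0 ?rho_ge0.
Qed.

(* rho = tau * sigma^2 with tau < 1: the powers of tau absorb the linear growth
   (m + 1) b0 of the band of B^m, leaving a geometric decay in sigma. *)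
Definition sigma := (1 + rho) / 2.
Definition tau := rho / sigma ^+ 2.
Definition neumann_const := Lam ^+ 2 * alpha ^+ 2 * b0.+1%:R / (1 - tau).

Lemma sigma_gt0 : 0 < sigma.
Proof. by rewrite divr_gt0 // ltr_wpDr ?rho_ge0. Qed.

Lemma sigma_lt1 : sigma < 1.
Proof. by rewrite ltr_pdivrMr // mul1r; have := rho_lt1; lra. Qed.

Lemma tau_bounds : 0 <= tau < 1.
Proof.
have s2 : 0 < sigma ^+ 2 by rewrite exprn_gt0 ?sigma_gt0.
rewrite divr_ge0 ?rho_ge0 ?ltW //= ltr_pdivrMr // mul1r.
have -> : sigma ^+ 2 = rho + ((1 - rho) / 2) ^+ 2 by rewrite /sigma; field.
by rewrite ltrDl exprn_gt0 // divr_gt0 // subr_gt0 rho_lt1.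
Qed.

Lemma rho_tau_sigma : rho = tau * sigma ^+ 2.
Proof. by rewrite /tau mulrAC -mulrA divff ?mulr1 // expf_neq0 // gt_eqF ?sigma_gt0. Qed.

Lemma neumann_const_ge0 : 0 <= neumann_const.
Proof.
case/andP: tau_bounds => _ t1.
by rewrite divr_ge0 ?subr_ge0 ?(ltW t1) // mulr_ge0 ?ler0n // mulr_ge0 ?sqr_ge0.
Qed.

Lemma neumann_coef_le m :
  Lam ^+ 2 * alpha ^+ 2 * rho ^+ m * (m.+1 * b0).+1%:R <= neumann_const * (sigma ^+ 2) ^+ m.
Proof.
case/andP: tau_bounds => t0 t1.
have hK : (m.+1 * b0).+1%:R <= b0.+1%:R * m.+1%:R :> R by rewrite -natrM ler_nat; lia.
have a0 : 0 <= Lam ^+ 2 * alpha ^+ 2 * b0.+1%:R * (sigma ^+ 2) ^+ m :=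
  mulr_ge0 (mulr_ge0 (mulr_ge0 (sqr_ge0 _) (sqr_ge0 _)) (ler0n _ _)) (exprn_ge0 _ (sqr_ge0 _)).
rewrite rho_tau_sigma [(tau * _) ^+ m]exprMn.
apply: le_trans (_ : Lam ^+ 2 * alpha ^+ 2 * b0.+1%:R * (sigma ^+ 2) ^+ m *
  (m.+1%:R * tau ^+ m) <= _).
  have -> : Lam ^+ 2 * alpha ^+ 2 * b0.+1%:R * (sigma ^+ 2) ^+ m * (m.+1%:R * tau ^+ m) =
    Lam ^+ 2 * alpha ^+ 2 * (tau ^+ m * (sigma ^+ 2) ^+ m) * (b0.+1%:R * m.+1%:R) by ring.
  apply: ler_wpM2l; last exact: hK.
  exact: mulr_ge0 (mulr_ge0 (sqr_ge0 _) (sqr_ge0 _))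
    (mulr_ge0 (exprn_ge0 _ t0) (exprn_ge0 _ (sqr_ge0 _))).
have -> : neumann_const * (sigma ^+ 2) ^+ m =
    Lam ^+ 2 * alpha ^+ 2 * b0.+1%:R * (sigma ^+ 2) ^+ m * (1 - tau)^-1.
  by rewrite /neumann_const; ring.
exact: ler_wpM2l a0 _ _ (natmul_expr_le m tau_bounds).
Qed.

Lemma sum_neumann_terms_le N x a b :
  \sum_(p < N) (\sum_(a <= m < b) neumann_term N x m p) ^+ 2 <=
  neumann_const * (sigma ^+ a / (1 - sigma)) ^+ 2 * sqnorm N x.
Proof.
have s0 := sigma_gt0; have s1 := sigma_lt1.
have w0 m : 0 < sigma ^+ m by apply: exprn_gt0.
set S := \sum_(a <= m < b) sigma ^+ m; set T := sigma ^+ a / (1 - sigma).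
have HS : S <= T by apply: geometric_tail_le; rewrite ltW.
have S0 : 0 <= S by apply: sumr_ge0 => m _; apply: ltW.
have Q0 : 0 <= neumann_const * sqnorm N x by rewrite mulr_ge0 ?neumann_const_ge0 ?sqnorm_ge0.
apply: le_trans (_ : \sum_(p < N) (S * \sum_(a <= m < b) (neumann_term N x m p ^+ 2 / sigma ^+ m))
  <= _); first by apply: ler_sum => p _; apply: cauchy_schwarz_weighted.
rewrite -mulr_sumr.
rewrite -(big_mkord xpredT (fun p => \sum_(a <= m < b) (neumann_term N x m p ^+ 2 / sigma ^+ m))).
rewrite exchange_big_nat /=.
have HB m : \sum_(0 <= p < N) (neumann_term N x m p ^+ 2 / sigma ^+ m) <=
    neumann_const * sqnorm N x * sigma ^+ m.
  rewrite -mulr_suml big_mkord ler_pdivrMr //.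
  apply: le_trans (neumann_term_sq_le N x m) _.
  have -> : neumann_const * sqnorm N x * sigma ^+ m * sigma ^+ m =
    neumann_const * (sigma ^+ 2) ^+ m * sqnorm N x by rewrite -exprM mulnC exprM; ring.
  exact: ler_wpM2r (sqnorm_ge0 N x) _ _ (neumann_coef_le m).
apply: le_trans (_ : S * \sum_(a <= m < b) (neumann_const * sqnorm N x * sigma ^+ m) <= _).
  by apply: ler_wpM2l => //; apply: ler_sum => m _; apply: HB.
rewrite -mulr_sumr.
have -> : neumann_const * T ^+ 2 * sqnorm N x = T * (neumann_const * sqnorm N x * T) by ring.
apply: ler_pM => //; first by rewrite mulr_ge0.
by apply: ler_wpM2l.
Qed.

Lemma neumann_rem_sq_le N x K :
  \sum_(p < N) neumann_rem N x K p ^+ 2 <= Lam ^+ 2 * (N%:R * (rho ^+ K / C ^+ 2 * sqnorm N x)).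
Proof.
pose z i c := if (c < nb i)%N then
   mulv (nb i) (Bpow (nb i) K) (mulv (nb i) (Ginv (nb i)) (trunc N x)) c else 0.
rewrite (eq_bigr (fun p : 'I_N => (\sum_(c < nb N) M p c * z (blk p) c) ^+ 2)); last first.
  move=> p _; rewrite /neumann_rem sqrrN; congr (_ ^+ 2).
  have hn : (nb (blk p) <= nb N)%N.
    by rewrite nb_leq // ltnW // (leq_ltn_trans (blk_leq Hnb p)).
  set v := mulv _ (Bpow _ K) _.
  rewrite (big_ord_widen_if (fun c => M p c * v c) hn); apply: eq_bigr => c _.
  by rewrite /z; case: ifP; rewrite ?mulr0.
apply: le_trans (sqnorm_M_blockwise N (nb N) z) _; apply: ler_wpM2l; first exact: sqr_ge0.
have -> : N%:R * (rho ^+ K / C ^+ 2 * sqnorm N x) = \sum_(i < N) (rho ^+ K / C ^+ 2 * sqnorm N x).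
  by rewrite sumr_const card_ord mulr_natl.
apply: ler_sum => i _.
have hn : (nb i <= nb N)%N by rewrite nb_leq // ltnW.
rewrite sqnorm_widen //; apply: le_trans (sqnorm_Bpow _ _ _) _.
rewrite -mulrA ler_wpM2l ?exprn_ge0 ?rho_ge0 // mulrC ler_pdivlMr ?exprn_gt0 // mulrC.
exact: le_trans (sqnorm_Ginv _ _) (sqnorm_trunc _ _ _).
Qed.

Definition Linv_apx_bound := 2 + 2 * (neumann_const / (1 - sigma) ^+ 2).

Lemma sqnorm_Linv_apx k N x :
  sqnorm N (mulv N (Linv_apx k) x) <= Linv_apx_bound * sqnorm N x.
Proof.
rewrite (eq_sqnorm (y := fun p => x p + \sum_(0 <= m < k) neumann_term N x m p)); last first.
  by move=> p hp; rewrite mulv_Linv_apx // big_mkord.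
apply: le_trans (sqnorm_add_le _ _ _) _.
have := ler_wpM2l (ler0n _ 2) (sum_neumann_terms_le N x 0 k).
rewrite /sqnorm expr0 -/(sqnorm N x) => H.
have -> : Linv_apx_bound * sqnorm N x = 2 * sqnorm N x +
  2 * (neumann_const * (1 / (1 - sigma)) ^+ 2 * sqnorm N x).
  by rewrite /Linv_apx_bound; field; rewrite subr_eq0 gt_eqF ?sigma_lt1.
by rewrite lerD2l.
Qed.

Lemma Linv_apx_ltri k p q : (p < q)%N -> Linv_apx k p q = 0.
Proof.
move=> h; rewrite /Linv_apx /schur_lower ifN; last by rewrite -leqNgt leq_blk // ltnW.
by rewrite addr0; case: eqP => // E; rewrite E ltnn in h.
Qed.

Lemma Linv_apx_diag k p : Linv_apx k p p = 1.
Proof. by rewrite /Linv_apx /schur_lower ltnn eqxx addr0. Qed.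

Lemma Linv_apx_lower k : blk_lower nb (Linv_apx k).
Proof.
move=> i j p q hij; rewrite !inblkE => /eqP hp /eqP hq; apply: Linv_apx_ltri.
by apply: (@ltn_of_blk _ Hnb); rewrite hp hq.
Qed.

Lemma Linv_apx_unit_diag k : blk_unit_diag nb (Linv_apx k).
Proof.
move=> i p q; rewrite !inblkE => /eqP hp /eqP hq.
by rewrite /Linv_apx /schur_lower hp hq ltnn addr0.
Qed.

Lemma Linv_apx_inB k : inB d (k * b0) (Linv_apx k).
Proof.
move=> p q hd; rewrite /Linv_apx /schur_lower.
have -> : (p == q) = false by apply/negbTE/eqP => E; move: hd; rewrite E Hd0 ltNge ler0n.
rewrite add0r; case: ifP => // _; rewrite big1 ?oppr0 // => c _.
have [->|hM] := eqVneq (M p c) 0; first by rewrite mul0r.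
have hpc : d p c <= b0%:R by rewrite leNgt; apply: contra hM => /HMd ->.
rewrite /neumann big1 ?mulr0 // => m _; apply: Bpow_dist; rewrite ltNge; apply/negP => H.
move: hd; rewrite ltNge => /negP; apply; apply: le_trans (Hdtri p c q) _.
apply: le_trans (lerD hpc H) _; rewrite -natrD ler_nat -mulSn leq_mul //.
Qed.

Lemma Linv_apx_band k : blk_band nb (k * b0) (Linv_apx k).
Proof.
move=> i j p q hb; rewrite !inblkE => /eqP hp /eqP hq; rewrite /Linv_apx /schur_lower.
have -> : (p == q) = false.
  by apply/negbTE/eqP => E; move: hb; rewrite -hp -hq E subnn ltn0.
rewrite add0r; case: ifP => // hqp; rewrite big1 ?oppr0 // => c _.
have [->|hM] := eqVneq (M p c) 0; first by rewrite mul0r.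
have hpc : (blk p <= blk c + b0)%N.
  by rewrite -leq_subLR leqNgt; apply: contra hM => h; apply/eqP/(blk_bandP HMband); rewrite h.
rewrite /neumann big1 ?mulr0 // => m _; rewrite Bpow_band //; apply/orP; left.
have : (b0 + m * b0 <= k * b0)%N by rewrite -mulSn leq_mul.
by move: hb; rewrite -hp -hq; lia.
Qed.

Definition err_bound k := 2 * neumann_const * (sigma ^+ k / (1 - sigma)) ^+ 2.

Lemma err_bound_small e : 0 < e -> exists k, err_bound k <= e.
Proof.
move=> e0; have s1 : 0 < 1 - sigma by rewrite subr_gt0 sigma_lt1.
set B := 2 * neumann_const / (1 - sigma) ^+ 2.
have B0 : 0 <= B by rewrite divr_ge0 ?sqr_ge0 // mulr_ge0 ?neumann_const_ge0.
have s2 : 0 <= sigma ^+ 2 < 1 by rewrite sqr_ge0 /= expr_lt1 ?sigma_lt1 ?ltW ?sigma_gt0.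
have [k Hk] := expr_le_small s2 (divr_gt0 e0 (ltr_wpDl B0 ltr01)).
exists k; have -> : err_bound k = B * (sigma ^+ 2) ^+ k.
  by rewrite /err_bound /B -exprM mulnC exprM expr_div_n; field; rewrite gt_eqF.
apply: le_trans (ler_wpM2l B0 Hk) _.
by rewrite mulrCA ler_piMr ?ltW // ltr_pdivrMr ?ltr_wpDl // mul1r ltrDl.
Qed.

Section BlockLU.
Variables (L U Linv : mx R).
Hypotheses (HLlow : blk_lower nb L) (HLdiag : blk_unit_diag nb L).
Hypotheses (HUup : blk_upper nb U) (HLU : mxmul_eq L U M).
Hypotheses (HLinvlow : blk_lower nb Linv).
Hypotheses (HLLinv : mxmul_eq L Linv (@idmx R)) (HLinvL : mxmul_eq Linv L (@idmx R)).

Lemma blk_upperP p q : (blk q < blk p)%N -> U p q = 0.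
Proof. by move=> h; apply: (HUup h (blkP Hnb p) (blkP Hnb q)). Qed.

Lemma Linv_unit_diag : blk_unit_diag nb Linv.
Proof.
move=> i p q; rewrite !inblkE => /eqP hp /eqP hq.
rewrite -[RHS](@mxmul_eq_trunc _ _ _ _ (nb i.+1) p q HLinvL); last first.
  by move=> k hk; apply: (blk_lowerP HLinvlow); apply: blk_ltn_nb hk; rewrite hp.
have hqi : (q < nb i.+1)%N by rewrite ltn_blk hq.
rewrite -(sum_mul_natdelta (Linv p) hqi); apply: eq_bigr => k _; congr (_ * _); apply/esym.
have hk : (blk k <= i)%N by rewrite -ltnS -ltn_blk.
case: (ltngtP (blk k) (blk q)) => hkq; last exact: (blk_unit_diagP HLdiag).
- by rewrite (blk_lowerP HLlow hkq); case: eqP => // E; rewrite E ltnn in hkq.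
- by lia.
Qed.

Lemma sum_Linv_M k c N : (nb (blk k).+1 <= N)%N -> \sum_(k' < N) Linv k k' * M k' c = U k c.
Proof.
move=> hN.
transitivity (\sum_(k' < N) Linv k k' * \sum_(k'' < N) L k' k'' * U k'' c).
  apply: eq_bigr => k' _; have [h|h] := ltnP (blk k) (blk k').
    by rewrite (blk_lowerP HLinvlow h) !mul0r.
  congr (_ * _); rewrite (mxmul_eq_trunc _ HLU) // => k'' hk''.
  apply: (blk_lowerP HLlow); apply: blk_ltn_nb hk''.
  by apply: leq_trans hN; apply: nb_leq.
rewrite (sum_mulA _ _ (Linv k) L (U^~ c)) -[RHS](@sum_natdelta _ N k (U^~ c)); last first.
  by apply: leq_trans hN; case/andP: (blkP Hnb k).
apply: eq_bigr => k'' _; rewrite (mxmul_eq_trunc _ HLinvL) // => k' hk'.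
exact: (blk_lowerP HLinvlow (blk_ltn_nb hN hk')).
Qed.

Lemma sum_Linv_M_prev p c : (blk c < blk p)%N ->
  \sum_(k < nb (blk p)) Linv p k * M k c = - M p c.
Proof.
move=> hc; case/andP: (blkP Hnb p) => Hp1 Hp2.
set n := nb (blk p) in Hp1 *; set N := nb (blk p).+1 in Hp2 *.
apply/eqP; rewrite -addr_eq0; apply/eqP.
transitivity (\sum_(k < N) Linv p k * M k c); last by rewrite sum_Linv_M // blk_upperP.
rewrite (big_ord_widen_if (fun k => Linv p k * M k c) (nb_leq Hnb (leqnSn (blk p)))).
rewrite -(sum_natdelta (M^~ c) Hp2) -big_split /=; apply: eq_bigr => k _.
have [hk|hk] := ltnP k n.
  rewrite (_ : (p == k) = false) ?mul0r ?addr0 //.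
  by apply/negbTE/eqP => E; move: hk Hp1; rewrite -E; lia.
rewrite add0r; have [hkN|hkN] := ltnP k N.
  by rewrite (blk_unit_diagP Linv_unit_diag) //; apply/esym/blk_uniq; rewrite hk hkN.
rewrite (blk_lowerP HLinvlow (blk_ltn_nb (leqnn _) hkN)) mul0r.
by rewrite (_ : (p == k) = false) ?mul0r //; apply/negbTE/eqP => E; move: hkN Hp2; rewrite -E; lia.
Qed.

Lemma Linv_schur p q : (blk q < blk p)%N ->
  Linv p q = - \sum_(c < nb (blk p)) M p c * Ginv (nb (blk p)) c q.
Proof.
move=> hq; set n := nb (blk p).
have hqn : (q < n)%N by rewrite ltn_blk.
rewrite -(sum_mul_natdelta (Linv p) hqn).
rewrite (eq_bigr (fun k : 'I_n => Linv p k * \sum_(c < n) M k c * Ginv n c q)); last first.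
  by move=> k _; rewrite sum_M_Ginv.
rewrite (sum_mulA _ _ (Linv p) M (Ginv n ^~ q)) -sumrN; apply: eq_bigr => c _.
by rewrite sum_Linv_M_prev ?mulNr // -ltn_blk.
Qed.

Lemma M_LU_trunc p c j : (c < nb j.+1)%N ->
  M p c = \sum_(k < nb j.+1) L p k * U k c.
Proof.
move=> hc; set n := nb j.+1; set N := nb (maxn j (blk p)).+1.
have hnN : (n <= N)%N by rewrite nb_leq // ltnS leq_maxl.
rewrite -(@mxmul_eq_trunc _ _ _ _ N p c HLU); last first.
  by move=> k hk; apply: (blk_lowerP HLlow); apply: blk_ltn_nb hk; rewrite nb_leq // ltnS leq_maxr.
rewrite (big_ord_widen_if (fun k => L p k * U k c) hnN); apply: eq_bigr => k _.
case: ifP => // /negbT; rewrite -leqNgt => hk; rewrite blk_upperP ?mulr0 //.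
have : (j < blk k)%N by rewrite ltnNge -ltnS -ltn_blk -leqNgt.
by move: hc; rewrite ltn_blk; lia.
Qed.

Lemma Linv_upper_delta k q : (blk k <= blk q)%N -> Linv k q = (k == q)%:R.
Proof.
by move=> h; rewrite (blk_unit_lower_split Hnb HLinvlow Linv_unit_diag) ifN ?addr0 // -leqNgt.
Qed.

Lemma sum_U_Ginv j k r : (k < nb j.+1)%N -> (r < nb j.+1)%N ->
  \sum_(c < nb j.+1) U k c * Ginv (nb j.+1) c r = Linv k r.
Proof.
move=> hk hr; set n := nb j.+1.
rewrite (eq_bigr (fun c : 'I_n => (\sum_(k' < n) Linv k k' * M k' c) * Ginv n c r)); last first.
  by move=> c _; rewrite sum_Linv_M // nb_leq // -ltn_blk.
rewrite -(sum_mulA _ _ (Linv k) M (Ginv n ^~ r)) -(sum_mul_natdelta (Linv k) hr).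
by apply: eq_bigr => k' _; rewrite sum_M_Ginv.
Qed.

Lemma L_schur p q : (blk q < blk p)%N ->
  L p q = \sum_(c < nb (blk q).+1) M p c * Ginv (nb (blk q).+1) c q.
Proof.
move=> hq; set n := nb (blk q).+1.
have hqn : (q < n)%N by case/andP: (blkP Hnb q).
rewrite (eq_bigr (fun c : 'I_n => (\sum_(k < n) L p k * U k c) * Ginv n c q)); last first.
  by move=> c _; rewrite -M_LU_trunc.
rewrite -(sum_mulA _ _ (L p) U (Ginv n ^~ q)) -(sum_mul_natdelta (L p) hqn).
apply: eq_bigr => k _; rewrite sum_U_Ginv // Linv_upper_delta //.
by rewrite -ltnS -ltn_blk.
Qed.

Lemma mulv_L_Linv N z p : (p < N)%N -> mulv N L (mulv N Linv z) p = z p.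
Proof.
move=> hp; rewrite /mulv (sum_mulA _ _ (L p) Linv z) -[RHS](sum_natdelta z hp).
apply: eq_bigr => r _; rewrite (mxmul_eq_trunc _ HLLinv) // => k hk.
by apply: (blk_unit_lower_ltri Hnb HLlow HLdiag); apply: leq_trans hp hk.
Qed.

Lemma Linv_sub_apx k :
  mxdiff Linv (Linv_apx k) =2 schur_lower (fun n c q => Ginv n c q - neumann k n c q).
Proof.
move=> p q; rewrite /mxdiff /Linv_apx /schur_lower; case: ifP => h.
  have -> : (p == q) = false by apply: contraTF h => /eqP ->; rewrite ltnn.
  by rewrite Linv_schur // add0r opprK addrC -sumrB -sumrN; apply: eq_bigr => c _; ring.
by rewrite addr0 Linv_upper_delta ?subrr // leqNgt h.
Qed.

Lemma mulv_Linv_sub_apx k K N x p : (k <= K)%N ->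
  mulv N (mxdiff Linv (Linv_apx k)) x p =
  \sum_(k <= m < K) neumann_term N x m p + neumann_rem N x K p.
Proof.
move=> hK; set n := nb (blk p); set y := trunc N x; set w := mulv n (Ginv n) y.
rewrite (_ : mulv N _ x p = mulv N (schur_lower (fun n c q => Ginv n c q - neumann k n c q)) x p);
  last by apply: eq_bigr => q _; rewrite Linv_sub_apx.
rewrite mulv_schur_lower /neumann_rem /neumann_term -/n -/y -/w.
under eq_bigr => c _ do rewrite mulv_sub mulv_scale mulv_sum.
have Hw c : (c < n)%N ->
    w c = alpha * \sum_(m < K) mulv n (Bpow n m) y c + mulv n (Bpow n K) w c.
  by apply: Bpow_neumann => q hq; rewrite mulv_M_Ginv.
rewrite (eq_bigr (fun c : 'I_n => M p c * (alpha * \sum_(k <= m < K) mulv n (Bpow n m) y c) +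
    M p c * mulv n (Bpow n K) w c)); last first.
  move=> c _; rewrite -/w Hw // -!(big_mkord xpredT (fun m => mulv n (Bpow n m) y c)).
  by rewrite (big_cat_nat (leq0n k) hK) /=; ring.
rewrite big_split /= opprD sumrN; congr (- _ - _).
under eq_bigr => c _ do rewrite mulr_sumr mulr_sumr.
rewrite exchange_big; apply: eq_bigr => m _.
by rewrite mulr_sumr; apply: eq_bigr => c _; ring.
Qed.

(* The remainder B^K G_n y is controlled only for fixed N (its bound grows with N), so
   it is made arbitrarily small by taking K large. *)
Lemma sqnorm_Linv_sub_apx k N x :
  sqnorm N (mulv N (mxdiff Linv (Linv_apx k)) x) <= err_bound k * sqnorm N x.
Proof.
apply/ler_addgt0Pr => e e0.
set Q := 2 * (Lam ^+ 2 * (N%:R * (1 / C ^+ 2 * sqnorm N x))).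
have Q0 : 0 <= Q := mulr_ge0 (ler0n _ 2) (mulr_ge0 (sqr_ge0 _)
  (mulr_ge0 (ler0n _ _) (mulr_ge0 (divr_ge0 ler01 (sqr_ge0 _)) (sqnorm_ge0 _ _)))).
have [K0 HK0] := expr_le_small rho_bounds (divr_gt0 e0 (ltr_wpDl Q0 ltr01)).
set K := (k + K0)%N.
have rK : rho ^+ K <= e / (Q + 1).
  by apply: le_trans HK0; rewrite ler_wiXn2l ?rho_ge0 ?ltW ?rho_lt1 ?leq_addl.
rewrite (eq_sqnorm (y := fun p => \sum_(k <= m < K) neumann_term N x m p + neumann_rem N x K p));
  last by move=> p _; rewrite (@mulv_Linv_sub_apx k K) // leq_addr.
apply: le_trans (sqnorm_add_le _ _ _) _.
apply: le_trans (lerD (ler_wpM2l (ler0n _ 2) (sum_neumann_terms_le N x k K))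
  (ler_wpM2l (ler0n _ 2) (neumann_rem_sq_le N x K))) _.
rewrite /err_bound; apply: lerD; first by rewrite !mulrA.
have -> : 2 * (Lam ^+ 2 * (N%:R * (rho ^+ K / C ^+ 2 * sqnorm N x))) = Q * rho ^+ K.
  by rewrite /Q; field; rewrite gt_eqF.
apply: le_trans (ler_wpM2l Q0 rK) _.
by rewrite mulrCA ler_piMr ?ltW // ltr_pdivrMr ?ltr_wpDl // mul1r ltrDl.
Qed.

Definition Gblk (c q : nat) : R :=
  if (c < nb (blk q).+1)%N then Ginv (nb (blk q).+1) c q else 0.

Definition blk_restrict j (y : nat -> R) q := if blk q == j then y q else 0.

Definition L_vec N x i c :=
  \sum_(q < nb i) (if (i - b0 <= blk q)%N then Gblk c q else 0) * trunc N x q.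

Lemma mulv_L_blockwise N x p : (p < N)%N ->
  mulv N L x p = x p + \sum_(c < nb N) M p c * L_vec N x (blk p) c.
Proof.
move=> hp; rewrite /mulv.
under eq_bigr => q _ do rewrite (blk_unit_lower_split Hnb HLlow HLdiag) mulrDl.
rewrite big_split /= (sum_natdelta x hp) (sum_prev_blocks N x p (L p)); congr (_ + _).
have hn : (nb (blk p) <= nb N)%N by rewrite nb_leq // ltnW // (leq_ltn_trans (blk_leq Hnb p)).
rewrite /L_vec (sum_mulA _ _ (M p) (fun c q => if (blk p - b0 <= blk q)%N then Gblk c q else 0)).
apply: eq_bigr => q _ /=; apply: (congr1 (fun a => a * _)).
have hq : (blk q < blk p)%N by rewrite -(ltn_blk q (blk p)).
rewrite (L_schur hq); have [h1|h1] := boolP (blk p - b0 <= blk q)%N.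
  have hq2 : (nb (blk q).+1 <= nb N)%N by apply: leq_trans hn; apply: nb_leq.
  rewrite (big_ord_widen_if (fun c => M p c * Ginv (nb (blk q).+1) c q) hq2).
  by apply: eq_bigr => c _; rewrite /Gblk; case: ifP; rewrite ?mulr0.
rewrite [RHS]big1 => [|c _]; last by rewrite mulr0.
apply: big1 => c _; rewrite (blk_bandP HMband) ?mul0r //; apply/orP; left.
have : (blk c < (blk q).+1)%N by rewrite -ltn_blk.
by move: h1; rewrite -ltnNge; lia.
Qed.

Definition Gpart N x j c :=
  if (c < nb j.+1)%N then mulv (nb j.+1) (Ginv (nb j.+1)) (blk_restrict j (trunc N x)) c else 0.

Lemma L_vec_blocks N x i c : L_vec N x i c = \sum_(i - b0 <= j < i) Gpart N x j c.
Proof.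
rewrite /L_vec (eq_bigr (fun q : 'I_(nb i) =>
    if (i - b0 <= blk q < i)%N then Gblk c q * trunc N x q else 0)); last first.
  by move=> q _; rewrite -(ltn_blk q i) ltn_ord andbT; case: ifP; rewrite ?mul0r.
rewrite (sum_blocks_range (nb i) (i - b0) i (fun q => Gblk c q * trunc N x q)).
apply: eq_big_nat => j /andP [_ hji].
rewrite /Gpart; case: ifP => hc; last first.
  by apply: big1 => q _; case: eqP => // hq; rewrite /Gblk hq hc mul0r.
have hn : (nb j.+1 <= nb i)%N by apply: nb_leq.
rewrite /mulv (big_ord_widen_if (fun q => Ginv (nb j.+1) c q * blk_restrict j (trunc N x) q) hn).
apply: eq_bigr => q _; rewrite /blk_restrict; case: eqP => hq.
  by rewrite ltn_blk hq ltnSn /Gblk hq hc.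
by case: ifP; rewrite ?mulr0.
Qed.

Lemma sqnorm_blk_restrict n j (y : nat -> R) : (nb j.+1 <= n)%N ->
  sqnorm n (blk_restrict j y) = sqnorm (nb j.+1) (blk_restrict j y).
Proof.
move=> hn; rewrite -(sqnorm_widen _ hn); apply: eq_sqnorm => q _.
rewrite /blk_restrict; case: (blk q =P j) => [hq|]; last by case: ifP.
by rewrite ltn_blk hq ltnSn.
Qed.

Lemma sqnorm_Gpart N x j n : (nb j.+1 <= n)%N ->
  C ^+ 2 * sqnorm n (Gpart N x j) <= sqnorm n (blk_restrict j (trunc N x)).
Proof.
move=> hn; rewrite sqnorm_widen // sqnorm_blk_restrict //; exact: sqnorm_Ginv.
Qed.

Lemma sum_sqnorm_blk_restrict n a b (y : nat -> R) :
  \sum_(a <= j < b) sqnorm n (blk_restrict j y) =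
  \sum_(q < n) (if (a <= blk q < b)%N then y q ^+ 2 else 0).
Proof.
rewrite (sum_blocks_range n a b (fun q => y q ^+ 2)); apply: eq_bigr => j _.
apply: eq_bigr => q _.
by rewrite /blk_restrict; case: ifP; rewrite ?expr0n.
Qed.

Lemma sqnorm_L_vec N x i : (i < N)%N ->
  C ^+ 2 * sqnorm (nb N) (L_vec N x i) <=
  b0%:R * \sum_(q < N) (if (blk q <= i <= blk q + b0)%N then x q ^+ 2 else 0).
Proof.
move=> hi.
have CS : sqnorm (nb N) (L_vec N x i) <= b0%:R * \sum_(i - b0 <= j < i) sqnorm (nb N) (Gpart N x j).
  rewrite /sqnorm exchange_big mulr_sumr /=; apply: ler_sum => c _; rewrite L_vec_blocks.
  apply: le_trans (cauchy_schwarz_weighted _ _ (fun j => Gpart N x j c) (fun=> ltr01)) _.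
  rewrite sumr_const_nat /=; under eq_bigr => j _ do rewrite divr1.
  apply: ler_wpM2r; first by apply: sumr_ge0 => j _; apply: sqr_ge0.
  by rewrite ler_nat; lia.
apply: le_trans (ler_wpM2l (sqr_ge0 C) CS) _; rewrite mulrCA ler_wpM2l ?ler0n //.
rewrite mulr_sumr; apply: le_trans (_ : \sum_(i - b0 <= j < i)
    sqnorm (nb N) (blk_restrict j (trunc N x)) <= _).
  by apply: ler_sum_nat => j /andP [_ hj]; apply: sqnorm_Gpart; rewrite nb_leq //; lia.
rewrite sum_sqnorm_blk_restrict (eq_bigr (fun q : 'I_(nb N) => if (q < N)%N then
    (if (i - b0 <= blk q < i)%N then x q ^+ 2 else 0) else 0)); last first.
  by move=> q _; rewrite /trunc; do 2 case: ifP => //; rewrite expr0n.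
rewrite -(big_ord_if_swap (nb N) N (fun q => if (i - b0 <= blk q < i)%N then x q ^+ 2 else 0)).
apply: ler_sum => q _; case: ifP => _; last by case: ifP => _ //; apply: sqr_ge0.
case: ifP => hq; last by case: ifP => _ //; apply: sqr_ge0.
by rewrite ifT //; move: hq; lia.
Qed.

Definition L_bound := 2 + 2 * (Lam ^+ 2 * (b0%:R / C ^+ 2) * b0.+1%:R).

Lemma L_bound_ge0 : 0 <= L_bound.
Proof.
by rewrite addr_ge0 // mulr_ge0 // mulr_ge0 ?ler0n // mulr_ge0 ?sqr_ge0 // divr_ge0 ?ler0n ?sqr_ge0.
Qed.

Lemma sqnorm_L N x : sqnorm N (mulv N L x) <= L_bound * sqnorm N x.
Proof.
have C2 : 0 < C ^+ 2 by rewrite exprn_gt0.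
rewrite (eq_sqnorm (y := fun p => x p + \sum_(c < nb N) M p c * L_vec N x (blk p) c));
  last by move=> p hp; rewrite mulv_L_blockwise.
apply: le_trans (sqnorm_add_le _ _ _) _.
have HL : sqnorm N (fun p => \sum_(c < nb N) M p c * L_vec N x (blk p) c) <=
    Lam ^+ 2 * (b0%:R / C ^+ 2 * (b0.+1%:R * sqnorm N x)).
  apply: le_trans (sqnorm_M_blockwise N (nb N) (L_vec N x)) _.
  apply: ler_wpM2l; first exact: sqr_ge0.
  rewrite mulrAC ler_pdivlMr // mulrC mulr_sumr.
  apply: le_trans (_ : \sum_(i < N) (b0%:R *
      \sum_(q < N) (if (blk q <= i <= blk q + b0)%N then x q ^+ 2 else 0)) <= _).
    by apply: ler_sum => i _; apply: sqnorm_L_vec.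
  by rewrite -mulr_sumr ler_wpM2l ?ler0n ?sum_window_le.
have -> : L_bound * sqnorm N x =
  2 * sqnorm N x + 2 * (Lam ^+ 2 * (b0%:R / C ^+ 2 * (b0.+1%:R * sqnorm N x))).
  by rewrite /L_bound; ring.
exact: lerD (lexx _) (ler_wpM2l (ler0n _ 2) HL).
Qed.

(* L_eps = L (I + (L^-1 - L_eps^-1) L_eps): ||L_eps|| stays bounded once
   ||L|| ||L^-1 - L_eps^-1|| is small. *)
Lemma sqnorm_Linv_apx_inv k N y : 2 * L_bound * err_bound k <= 1 / 2 ->
  sqnorm N (mulv N (ltri_inv (Linv_apx k)) y) <= 4 * L_bound * sqnorm N y.
Proof.
move=> hE; set z := mulv N (ltri_inv (Linv_apx k)) y.
set E := mxdiff Linv (Linv_apx k).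
have Ez : sqnorm N z = sqnorm N (mulv N L (fun p => y p + mulv N E z p)).
  apply: eq_sqnorm => p hp; rewrite -(mulv_L_Linv z hp); apply: eq_mulv => r hr.
  rewrite -(mulv_A_ltri_inv (@Linv_apx_ltri k) (@Linv_apx_diag k) y hr) -/z.
  by rewrite /mulv -big_split /=; apply: eq_bigr => q _; rewrite /E /mxdiff; ring.
have L0 := L_bound_ge0; have y0 := sqnorm_ge0 N y; have z0 := sqnorm_ge0 N z.
have h : sqnorm N z <= 2 * L_bound * sqnorm N y + (2 * L_bound * err_bound k) * sqnorm N z.
  rewrite [X in X <= _]Ez; apply: le_trans (sqnorm_L _ _) _.
  apply: le_trans (ler_wpM2l L0 (sqnorm_add_le _ _ _)) _.
  apply: le_trans (ler_wpM2l L0 (lerD (lexx _) (ler_wpM2l (ler0n _ 2)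
    (sqnorm_Linv_sub_apx k N z)))) _.
  have -> : L_bound * (2 * sqnorm N y + 2 * (err_bound k * sqnorm N z)) =
    2 * L_bound * sqnorm N y + 2 * L_bound * err_bound k * sqnorm N z by ring.
  exact: lexx.
have := ler_wpM2r z0 hE; lra.
Qed.

Lemma Linv_banded_approx : exists K : R, forall eps : R, 0 < eps ->
    exists (b : nat) (Leps Leps_inv : mx R),
      [/\ blk_lower nb Leps_inv /\ blk_unit_diag nb Leps_inv,
          inB d b Leps_inv /\ blk_band nb b Leps_inv,
          opnorm_le (mxdiff Linv Leps_inv) eps,
          mxmul_eq Leps Leps_inv (@idmx R) /\ mxmul_eq Leps_inv Leps (@idmx R) &
          exists c1 c2 : R, [/\ opnorm_le Leps c1, opnorm_le Leps_inv c2 & c1 + c2 <= K]].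
Proof.
exists ((4 * L_bound + 1) + (Linv_apx_bound + 1)) => eps e0.
have L4 : 0 <= 4 * L_bound by rewrite mulr_ge0 ?L_bound_ge0.
have m0 : 0 < Num.min (eps ^+ 2) (4 * L_bound + 1)^-1.
  by rewrite lt_min exprn_gt0 // invr_gt0 ltr_wpDl.
have [k Hk] := err_bound_small m0; move: Hk; rewrite le_min => /andP [Hk_eps Hk_L].
have Hk_half : 2 * L_bound * err_bound k <= 1 / 2.
  have E0 : 0 <= err_bound k := mulr_ge0 (mulr_ge0 (ler0n _ 2) neumann_const_ge0) (sqr_ge0 _).
  move: Hk_L; rewrite -div1r ler_pdivlMr ?ltr_wpDl //; nra.
exists (k * b0)%N, (ltri_inv (Linv_apx k)), (Linv_apx k); split.
- by split; [apply: Linv_apx_lower | apply: Linv_apx_unit_diag].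
- by split; [apply: Linv_apx_inB | apply: Linv_apx_band].
- apply: opnorm_le_sqnorm; first exact: ltW.
  by move=> N x; apply: le_trans (sqnorm_Linv_sub_apx k N x) _; rewrite ler_wpM2r ?sqnorm_ge0.
- by split; [apply: mxmul_ltri_inv_A | apply: mxmul_A_ltri_inv];
    [apply: Linv_apx_ltri | apply: Linv_apx_diag | apply: Linv_apx_ltri | apply: Linv_apx_diag].
exists (4 * L_bound + 1), (Linv_apx_bound + 1); split => //.
- by apply: opnorm_le_succ => // N y; apply: sqnorm_Linv_apx_inv.
- apply: opnorm_le_succ => [|N x]; last exact: sqnorm_Linv_apx.
  by rewrite addr_ge0 // mulr_ge0 // divr_ge0 ?sqr_ge0 ?neumann_const_ge0.
Qed.
End BlockLU.
End Approximation.

Theorem lemma3p9 (R : realType) (M L U Linv : mx R) (nb : nat -> nat)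
  (d : nat -> nat -> R) (b0 : nat) :
  bounded M -> elliptic M ->
  block_structure nb -> blk_band nb b0 M ->
  is_metric d -> inB d b0 M ->
  (* M = L U, block LU factorization *)
  blk_lower nb L -> blk_unit_diag nb L -> blk_upper nb U -> mxmul_eq L U M ->
  (* Linv = L^{-1} (the block-lower triangular inverse of L) *)
  blk_lower nb Linv -> mxmul_eq L Linv (@idmx R) -> mxmul_eq Linv L (@idmx R) ->
  exists K : R, forall eps : R, 0 < eps ->
    exists (b : nat) (Leps Leps_inv : mx R),
      [/\ blk_lower nb Leps_inv /\ blk_unit_diag nb Leps_inv,
          inB d b Leps_inv /\ blk_band nb b Leps_inv,
          opnorm_le (mxdiff Linv Leps_inv) eps,
          mxmul_eq Leps Leps_inv (@idmx R) /\ mxmul_eq Leps_inv Leps (@idmx R) &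
          exists c1 c2 : R, [/\ opnorm_le Leps c1, opnorm_le Leps_inv c2 & c1 + c2 <= K]].
Proof.
move=> Mbd Mell Hnb HMband [_ [Hd0 [_ Hdtri]]] HMd.
have [Lam [C [HC HCLam HMbound HMell]]] := bounded_elliptic_constants Mbd Mell.
have Hdd p : d p p = 0 by apply/Hd0.
exact: (Linv_banded_approx HC HCLam HMbound HMell Hnb HMband HMd Hdd Hdtri).
Qed.
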